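(* Let $p,\Delta>0$ be fixed integers and suppose that sequences $\{\xi_{s,t}\}_{s,t\ge0}\subseteq\mathbb{N}$ and $\{k_i\}_{i\ge0}\subseteq\mathbb{N}$ satisfy $$k_{s+t}=k_s+k_t+p-\Delta\xi_{s,t}\quad\text{for all } s,t\ge0.$$ Then $\Delta\xi_{s,0}=\Delta\xi_{0,s}=k_0+p$ for all $s\ge0$, and $$k_n=nk_1+(n-1)p-\Delta\sum_{s=1}^{n-1}\xi_{1,s}\quad(n>0),\qquad \xi_{u,v}=-\sum_{s=1}^{\min\{u,v\}-1}\xi_{1,s}+\sum_{s=\max\{u,v\}}^{u+v-1}\xi_{1,s}\quad(u,v>0).$$
   Context: $\mathbb{N}$ includes $0$. A sum $\sum_{i=a}^b$ with $b<a$ is zero. *)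

From mathcomp Require Import all_boot all_order all_algebra.

From mathcomp Require Import all_boot all_order all_algebra.
From mathcomp Require Import ring.
Import GRing.Theory Num.Theory.
Local Open Scope ring_scope.

(* Taking s = 0 or t = 0 in the recurrence gives the first claim. Taking s = 1 and
   unrolling gives k_n = n k_1 + (n - 1) p - Δ S_n with S_n the partial sums of
   ξ_{1,·}. Substituting this closed form back into the recurrence leaves
   Δ ξ_{u,v} = Δ (S_{u+v} - S_u - S_v); after cancelling Δ, the three partial
   sums overlap on [1, min u v) and [max u v, u + v). *)

Lemma sumr_nat1_addn_minn_maxn (V : zmodType) (f : nat -> V) (u v : nat) :
  \sum_(1 <= s < u + v) f s - \sum_(1 <= s < u) f s - \sum_(1 <= s < v) f s
  = - \sum_(1 <= s < minn u v) f s + \sum_(maxn u v <= s < u + v) f s.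
Proof.
wlog le_uv : u v / (u <= v)%N.
  move=> sym; case/orP: (leq_total u v) => [/sym //|/sym].
  by rewrite addnC minnC maxnC addrAC.
rewrite (minn_idPl le_uv) (maxn_idPr le_uv).
have [v0|v_neq0] := eqVneq v 0%N.
  move: le_uv; rewrite v0 leqn0 => /eqP->.
  by rewrite !big_geq // !subr0 oppr0 addr0.
rewrite (@big_cat_nat _ _ _ v) ?lt0n ?leq_addl //.
by rewrite [X in X - _ - _]addrC addrAC addrK addrC.
Qed.

Section AddRecurrence.

Context {R : comPzRingType} {p D : R} {k : nat -> R} {xi : nat -> nat -> R}.
Hypothesis k_add : forall s t, k (s + t) = k s + k t + p - D * xi s t.

Local Notation sxi n := (\sum_(1 <= s < n) xi 1%N s).

Lemma mul_xi s t : D * xi s t = k s + k t + p - k (s + t).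
Proof. by rewrite k_add; ring. Qed.

Lemma mul_xi_r0 s : D * xi s 0 = k 0 + p.
Proof. by rewrite mul_xi addn0; ring. Qed.

Lemma mul_xi_0r s : D * xi 0 s = k 0 + p.
Proof. by rewrite mul_xi add0n; ring. Qed.

Lemma k_closed_form n : (0 < n)%N ->
  k n = n%:R * k 1 + (n%:R - 1) * p - D * sxi n.
Proof.
case: n => // n _; elim: n => [|n IH]; first by rewrite big_geq //; ring.
by rewrite -add1n k_add add1n IH (big_nat_recr n.+1) //= -(natr1 n.+1); ring.
Qed.

Lemma xi_partial_sums u v : GRing.lreg D -> (0 < u)%N -> (0 < v)%N ->
  xi u v = sxi (u + v) - sxi u - sxi v.
Proof.
move=> D_lreg u_gt0 v_gt0; apply: D_lreg.
have uv_gt0 : (0 < u + v)%N by rewrite addn_gt0 u_gt0.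
rewrite mul_xi (k_closed_form _ uv_gt0) (k_closed_form _ u_gt0).
by rewrite (k_closed_form _ v_gt0) natrD; ring.
Qed.

End AddRecurrence.

Theorem lemma2p6 (p Delta : nat) (hp : (0 < p)%N) (hD : (0 < Delta)%N)
  (xi : nat -> nat -> nat) (k : nat -> nat)
  (hrec : forall s t : nat,
      (k (s + t)%N)%:Z = (k s)%:Z + (k t)%:Z + p%:Z - Delta%:Z * (xi s t)%:Z) :
  (forall s : nat,
      Delta%:Z * (xi s 0%N)%:Z = (k 0%N)%:Z + p%:Z /\
      Delta%:Z * (xi 0%N s)%:Z = (k 0%N)%:Z + p%:Z) /\
  (forall n : nat, (0 < n)%N ->
      (k n)%:Z = n%:Z * (k 1%N)%:Z + (n%:Z - 1) * p%:Z
                 - Delta%:Z * \sum_(1 <= s < n) (xi 1%N s)%:Z) /\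
  (forall u v : nat, (0 < u)%N -> (0 < v)%N ->
      (xi u v)%:Z = - (\sum_(1 <= s < minn u v) (xi 1%N s)%:Z)
                    + \sum_(maxn u v <= s < (u + v)%N) (xi 1%N s)%:Z).
Proof.
have Delta_lreg : GRing.lreg Delta%:Z by apply: mulfI; rewrite eqz_nat -lt0n.
split; [|split].
- by move=> s; rewrite (mul_xi_r0 hrec) (mul_xi_0r hrec).
- by move=> n n_gt0; rewrite (k_closed_form hrec _ n_gt0) natz.
- move=> u v u_gt0 v_gt0; rewrite (xi_partial_sums hrec _ _ Delta_lreg u_gt0 v_gt0).
  exact: sumr_nat1_addn_minn_maxn.
Qed.
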